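(* Let $t_0>0$ and let $f:\{-1,0,1\}\times[t_0,\infty)\to[0,\infty)$ be such that $f(j,t)$ is Lebesgue measurable in $t$ for each $j$. If there are $D\ge0$ and $\alpha\in\mathbb{R}$ such that, for all $j\in\{0,1\}$ and all $t_2\ge t_1\ge t_0$, $$f(j,t_2)+\int_{t_1}^{t_2}f(j-1,t)\,dt\lesssim f(j,t_1)+t_1^{\alpha+j}D,$$ then for all $t\ge2t_0$, $$f(0,t)\lesssim_\alpha t^{-1}f(1,t/2)+t^{\alpha}D.$$
   Context: $A\lesssim B$ means $A\le CB$ for a constant $C$ independent of $t,t_1,t_2$ and $D$; $\lesssim_\alpha$ means the constant may also depend on $\alpha$. *)

From HB Require Import structures.
From mathcomp Require Import all_boot all_order all_algebra.
From mathcomp Require Export all_classical all_reals all_analysis.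
Set Implicit Arguments. Unset Strict Implicit. Unset Printing Implicit Defensive.

From HB Require Import structures.
From mathcomp Require Import all_boot all_order all_algebra.
From mathcomp Require Import all_classical all_reals all_analysis.
From mathcomp Require Import ring lra.

(* For s in [t/2, t], the case j = 0 of the hypothesis (integral dropped)
   gives f(0,s) >= f(0,t)/C - M t^alpha D, where M = 2^-alpha + 1 bounds
   (s/t)^alpha whatever the sign of alpha.  Integrating this lower bound over
   [t/2, t] and comparing with the case j = 1 on the same interval bounds
   (t/2) (f(0,t)/C - M t^alpha D) by C (f(1,t/2) + (t/2)^(alpha+1) D), which
   rearranges into the claim. *)

Set Implicit Arguments.
Unset Strict Implicit.
Unset Printing Implicit Defensive.
Import Order.TTheory GRing.Theory Num.Theory.
Local Open Scope classical_set_scope.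
Local Open Scope ring_scope.

Lemma powR_le_between (R : realType) (a r s t : R) :
  0 < r -> 0 < t -> r * t <= s <= t -> s `^ a <= (r `^ a + 1) * t `^ a.
Proof.
move=> r0 t0 /andP[rts st].
have rt0 : 0 < r * t by rewrite mulr_gt0.
have s0 : 0 < s by exact: lt_le_trans rts.
rewrite mulrDl mul1r.
have [a0|a0] := leP 0 a.
  rewrite -[s `^ a]add0r; apply: lerD; first by rewrite mulr_ge0 ?powR_ge0.
  by apply: ge0_ler_powR => //; rewrite nnegrE ltW.
rewrite -[s `^ a]addr0; apply: lerD; last exact: powR_ge0.
rewrite -powRM ?(ltW r0) ?(ltW t0) //.
have powR_inv x : x `^ a = (x `^ (- a))^-1 by rewrite -powRN opprK.
rewrite (powR_inv s) (powR_inv (r * t)) lef_pV2 ?posrE ?powR_gt0 //.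
by apply: ge0_ler_powR; rewrite ?oppr_ge0 ?nnegrE ?(ltW a0) ?(ltW rt0) ?(ltW s0).
Qed.

Lemma integral_itv_ge_cst (R : realType) (g : R -> R) (a b c : R) :
  a <= b -> measurable_fun `[a, b] g ->
  (forall x, a <= x <= b -> 0 <= g x) -> (forall x, a <= x <= b -> c <= g x) ->
  ((c * (b - a))%:E <= \int[lebesgue_measure]_(x in `[a, b]) (g x)%:E)%E.
Proof.
move=> ab mg g_ge0 c_le_g.
have [c_le0|c_gt0] := leP c 0.
  apply: (@le_trans _ _ 0%E); first by rewrite lee_fin mulr_le0_ge0 // subr_ge0.
  by apply: integral_ge0 => x /=; rewrite in_itv /= lee_fin => /g_ge0.
have -> : (c * (b - a))%:E =
    (\int[lebesgue_measure]_(x in `[a, b]) (cst c%:E) x)%E.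
  rewrite integral_cst; last exact: measurable_itv.
  rewrite -[X in (_ * X)%E]/(lebesgue_measure (`[a, b]%classic : set R)).
  rewrite lebesgue_measure_itv /= lte_fin.
  case: ltP => [_|ba]; first by rewrite -EFinD -EFinM.
  have -> : b = a by apply/le_anti; rewrite ab ba.
  by rewrite subrr mulr0 mule0.
apply: ge0_le_integral.
- exact: measurable_itv.
- by move=> x _; rewrite lee_fin ltW.
- exact: measurable_cst.
- exact/measurable_realfun.measurable_EFinP.
- by move=> x /=; rewrite in_itv /= lee_fin => /c_le_g.
Qed.

Section TwoScaleBound.

Variables (R : realType) (alpha C t0 D : R) (f : int -> R -> R).
Hypotheses (C_gt0 : 0 < C) (t0_gt0 : 0 < t0) (D_ge0 : 0 <= D).
Hypothesis f0_meas : measurable_fun `[t0, +oo[ (f 0).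
Hypothesis f_ge0 :
  forall j : int, -1 <= j <= 1 -> forall t, t0 <= t -> 0 <= f j t.
Hypothesis f_energy : forall j : int, 0 <= j <= 1 ->
  forall t1 t2 : R, t0 <= t1 -> t1 <= t2 ->
    ((f j t2)%:E + \int[lebesgue_measure]_(x in `[t1, t2]) (f (j - 1) x)%:E
      <= (C * (f j t1 + t1 `^ (alpha + j%:~R) * D))%:E)%E.

Lemma f0_le_earlier (s t : R) : t0 <= s -> s <= t ->
  f 0 t <= C * (f 0 s + s `^ alpha * D).
Proof.
move=> t0s st; have := f_energy (j := 0) erefl t0s st; rewrite sub0r addr0.
have int_ge0 : (0 <= \int[lebesgue_measure]_(x in `[s, t]) (f (-1) x)%:E)%E.
  apply: integral_ge0 => x /=; rewrite in_itv /= => /andP[sx _].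
  by rewrite lee_fin f_ge0 // (le_trans t0s).
by move=> /(le_trans (leeDl _ int_ge0)); rewrite lee_fin.
Qed.

Lemma integral_f0_le (s t : R) : t0 <= s -> s <= t ->
  (\int[lebesgue_measure]_(x in `[s, t]) (f 0 x)%:E
    <= (C * (f 1 s + s `^ (alpha + 1) * D))%:E)%E.
Proof.
move=> t0s st; apply: le_trans (f_energy (j := 1) erefl t0s st).
by rewrite subrr leeDr // lee_fin f_ge0 // (le_trans t0s).
Qed.

Lemma f0_two_scale_bound (t : R) : 2 * t0 <= t ->
  f 0 t <= 2 * C ^+ 2 * (t^-1 * f 1 (t / 2))
           + (C ^+ 2 + C) * (2^-1 `^ alpha + 1) * (t `^ alpha * D).
Proof.
move=> t_ge; set M := 2^-1 `^ alpha + 1; set T := t / 2.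
have t_gt0 : 0 < t by apply: lt_le_trans t_ge; rewrite mulr_gt0.
have T_gt0 : 0 < T by rewrite divr_gt0.
have t0_le_T : t0 <= T by rewrite /T; lra.
have T_le_t : T <= t by rewrite /T; lra.
have powR_le_M s : T <= s <= t -> s `^ alpha <= M * t `^ alpha.
  by move=> Tst; apply: powR_le_between; rewrite ?invr_gt0 // mulrC.
have f0_lower s : T <= s <= t -> f 0 t / C - M * t `^ alpha * D <= f 0 s.
  move=> /[dup] Tst /andP[Ts st].
  rewrite lerBlDr ler_pdivrMr // mulrC.
  apply: le_trans (f0_le_earlier (le_trans t0_le_T Ts) st) _.
  by rewrite ler_wpM2l ?(ltW C_gt0) // lerD2l ler_wpM2r // powR_le_M.
have mean_le : (f 0 t / C - M * t `^ alpha * D) * T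
               <= C * (f 1 T + T `^ alpha * T * D).
  rewrite -lee_fin -[X in (_ * X)%:E](_ : t - T = T); last by rewrite /T; lra.
  apply: le_trans (integral_itv_ge_cst T_le_t _ _ f0_lower) _.
  - apply: measurable_funS f0_meas; first exact: measurable_itv.
    by move=> x /=; rewrite !in_itv /= andbT => /andP[Tx _]; apply: le_trans Tx.
  - by move=> x /andP[Tx _]; apply: f_ge0 => //; apply: le_trans Tx.
  apply: le_trans (integral_f0_le t0_le_T T_le_t) _.
  by rewrite powRD ?powRr1 ?(ltW T_gt0) ?(gt_eqF T_gt0) ?implybT // mulrA.
have f0_div_C_le :
    f 0 t / C <= 2 * C * (t^-1 * f 1 T) + (C + 1) * M * (t `^ alpha * D).
  rewrite -(ler_pM2r T_gt0) mulrDl.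
  have powR_T_le : C * (T `^ alpha * D) * T <= C * (M * (t `^ alpha * D)) * T.
    by rewrite ler_pM2r // ler_pM2l // mulrA ler_wpM2r // powR_le_M // lexx T_le_t.
  have -> : 2 * C * (t^-1 * f 1 T) * T = C * f 1 T.
    by rewrite /T; field; rewrite gt_eqF.
  lra.
rewrite -[f 0 t](mulfVK (lt0r_neq0 C_gt0)).
apply: le_trans (ler_wpM2r (ltW C_gt0) f0_div_C_le) _.
lra.
Qed.

End TwoScaleBound.

Theorem lemma5p1 (R : realType) (alpha C : R) (hC : 0 < C) :
  exists C' : R, 0 < C' /\
  forall (t0 D : R) (f : int -> R -> R),
    0 < t0 -> 0 <= D ->
    (forall j : int, (-1 <= j <= 1)%R ->
       measurable_fun `[t0, +oo[ (f j)) ->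
    (forall j : int, (-1 <= j <= 1)%R -> forall t, t0 <= t -> 0 <= f j t) ->
    (forall j : int, (0 <= j <= 1)%R ->
       forall t1 t2 : R, t0 <= t1 -> t1 <= t2 ->
         ((f j t2)%:E + \int[lebesgue_measure]_(x in `[t1, t2]) (f (j - 1) x)%:E
           <= (C * (f j t1 + t1 `^ (alpha + j%:~R) * D))%:E)%E) ->
    forall t : R, 2 * t0 <= t ->
      f 0 t <= C' * (t^-1 * f 1 (t / 2) + t `^ alpha * D).
Proof.
set a := 2 * C ^+ 2; set b := (C ^+ 2 + C) * (2^-1 `^ alpha + 1).
have a_gt0 : 0 < a by rewrite mulr_gt0 ?exprn_gt0.
have b_gt0 : 0 < b by rewrite mulr_gt0 ?addr_gt0 ?exprn_gt0 ?ltr_pwDr ?powR_ge0.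
exists (a + b); split; first exact: addr_gt0.
move=> t0 D f t0_gt0 D_ge0 f_meas f_ge0 f_energy t t_ge.
have t_gt0 : 0 < t by apply: lt_le_trans t_ge; rewrite mulr_gt0.
have u_ge0 : 0 <= t^-1 * f 1 (t / 2).
  by rewrite mulr_ge0 ?invr_ge0 ?(ltW t_gt0) // f_ge0 //; lra.
have v_ge0 : 0 <= t `^ alpha * D by rewrite mulr_ge0 ?powR_ge0.
apply: le_trans (f0_two_scale_bound hC t0_gt0 D_ge0 (f_meas 0 erefl) f_ge0 f_energy t_ge) _.
have := mulr_ge0 (ltW a_gt0) v_ge0; have := mulr_ge0 (ltW b_gt0) u_ge0.
rewrite /a /b; lra.
Qed.
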